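(* Let $n$ and $m$ be coprime positive integers. Then $c_{\mathrm{poly}}(nm)\geq c_{\mathrm{poly}}(n)\,c_{\mathrm{poly}}(m)$.
   Context: $S(\mathbb{Z}_n)$ is the set of bijections $\mathbb{Z}_n\to\mathbb{Z}_n$, and $S_{\mathrm{poly}}(\mathbb{Z}_n)$ is the set of $\pi\in S(\mathbb{Z}_n)$ for which there is a polynomial $f\in\mathbb{Z}_n[x]$ with $\pi(x)=f(x)$ for all $x\in\mathbb{Z}_n$. $\mathrm{cyc}(\pi)$ is the number of cycles (including fixed points) of $\pi$. Define $c_{\mathrm{poly}}(n)=\min_{\pi\in S_{\mathrm{poly}}(\mathbb{Z}_n)}\max_{k\in\mathbb{Z}_n}\mathrm{cyc}(x\mapsto\pi(x+k))$. *)

From mathcomp Require Import all_boot all_fingroup.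
From mathcomp Require Import boolp.
Set Implicit Arguments. Unset Strict Implicit. Unset Printing Implicit Defensive.

(* Z_n is modelled by 'I_n = {0,...,n-1}, with arithmetic taken mod n. *)

Lemma Zn_pos n (x : 'I_n) : 0 < n.
Proof. by apply: leq_ltn_trans (ltn_ord x). Qed.

Definition Zn_add n (k x : 'I_n) : 'I_n :=
  Ordinal (ltn_pmod (x + k) (Zn_pos x)).

Lemma Zn_add_inj n (k : 'I_n) : injective (Zn_add k).
Proof.
move=> x y /(congr1 val) /= /eqP; rewrite eqn_modDr => /eqP.
by rewrite !modn_small // => /val_inj.
Qed.

Definition shift_perm n (k : 'I_n) : {perm 'I_n} := perm (@Zn_add_inj n k).

(* A polynomial f = sum_i a_i x^i in Z_n[x], given by its coefficient list,
   evaluated at x in Z_n (coefficients taken as natural representatives). *)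
Definition poly_eval_mod (n : nat) (a : seq nat) (x : nat) : nat :=
  (\sum_(i < size a) nth 0 a i * x ^ i) %% n.

Definition is_poly_perm n (pi : {perm 'I_n}) : Prop :=
  exists a : seq nat, forall x : 'I_n, val (pi x) = poly_eval_mod n a x.

(* cyc(pi): number of cycles (fixed points included) *)
Definition cyc n (pi : {perm 'I_n}) : nat := #|porbits pi|.

(* max_k cyc(x |-> pi(x + k)); note (s * t) x = t (s x) for perms. *)
Definition max_shift_cyc n (pi : {perm 'I_n}) : nat :=
  \max_(k : 'I_n) cyc (shift_perm k * pi).

(* The neutral
   element n.+1 exceeds every value (max_shift_cyc <= n) and the identity is
   always a polynomial permutation, so this is the true minimum. *)
Definition c_poly (n : nat) : nat :=
  \big[minn/n.+1]_(pi : {perm 'I_n} | `[< is_poly_perm pi >]) max_shift_cyc pi.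

(* A polynomial permutation of Z_(nm) reduces, coefficientwise, to polynomial
   permutations of Z_n and Z_m, and so do all its shifts.  For coprime n and m
   the Chinese remainder map Z_(nm) -> Z_n x Z_m is onto, so every pair of a
   cycle of the reduction mod n and a cycle of the reduction mod m is met by a
   cycle upstairs: shifting by the k that is congruent to the best shifts mod n
   and mod m gives at least c_poly(n) c_poly(m) cycles. *)
From mathcomp Require Import all_boot order all_fingroup.
From mathcomp Require Import boolp.
Set Implicit Arguments. Unset Strict Implicit. Unset Printing Implicit Defensive.

Lemma porbit_perm1 (T : finType) (s : {perm T}) x : porbit s (s x) = porbit s x.
Proof. by have := porbit_perm s 1 x; rewrite expg1. Qed.

Section PorbitCount.
Variable T : finType.
Implicit Type s : {perm T}.

Lemma porbit_const (U : Type) s (g : T -> U) :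
  (forall x, g (s x) = g x) -> forall x y, y \in porbit s x -> g y = g x.
Proof.
move=> gs x _ /porbitP[i ->]; elim: i => [|i IH]; first by rewrite expg0 perm1.
by rewrite expgSr permM gs.
Qed.

Lemma card_imset_porbit_const (U : finType) s (g : T -> U) :
  (forall x, g (s x) = g x) -> #|g @: T| <= #|porbits s|.
Proof.
move=> gs; have g_porbit x : g @: porbit s x = [set g x].
  apply/setP => z; rewrite inE; apply/imsetP/eqP => [[y /(porbit_const gs) -> ->]|->] //.
  by exists x; rewrite ?porbit_id.
rewrite -(card_imset _ set1_inj).
have -> : set1 @: (g @: T) = (fun A : {set T} => g @: A) @: porbits s.
  by rewrite -!imset_comp; apply: eq_imset => x; rewrite /= g_porbit.
exact: leq_imset_card.
Qed.

Lemma card_porbits_semiconj2 (T1 T2 : finType) s (s1 : {perm T1}) (s2 : {perm T2})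
    (f1 : T -> T1) (f2 : T -> T2) :
    (forall x, f1 (s x) = s1 (f1 x)) -> (forall x, f2 (s x) = s2 (f2 x)) ->
    (forall a b, exists x, f1 x = a /\ f2 x = b) ->
  #|porbits s1| * #|porbits s2| <= #|porbits s|.
Proof.
move=> f1s f2s f12_onto; pose g x := (porbit s1 (f1 x), porbit s2 (f2 x)).
have gs x : g (s x) = g x by rewrite /g f1s f2s !porbit_perm1.
rewrite -cardsX; apply: leq_trans (card_imset_porbit_const gs).
apply/subset_leq_card/subsetP => -[A B] /setXP[/imsetP[a _ ->] /imsetP[b _ ->]].
by have [x [<- <-]] := f12_onto a b; apply: imset_f.
Qed.

End PorbitCount.

Lemma poly_eval_modn d a x : poly_eval_mod d a (x %% d) = poly_eval_mod d a x.
Proof.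
rewrite /poly_eval_mod -[LHS]modn_summ -[RHS]modn_summ; congr (_ %% _).
by apply: eq_bigr => i _; rewrite -modnMmr modnXm modnMmr.
Qed.

Definition Zn_proj N d (d_gt0 : 0 < d) (x : 'I_N) : 'I_d :=
  Ordinal (ltn_pmod x d_gt0).

Lemma Zn_proj_onto_coprime n m (n_gt0 : 0 < n) (m_gt0 : 0 < m) :
    coprime n m ->
  forall (a : 'I_n) (b : 'I_m), exists x : 'I_(n * m),
    Zn_proj n_gt0 x = a /\ Zn_proj m_gt0 x = b.
Proof.
move=> co_nm a b; have nm_gt0 : 0 < n * m by rewrite muln_gt0 n_gt0 m_gt0.
exists (Ordinal (ltn_pmod (chinese n m a b) nm_gt0)).
split; apply: val_inj.
  by rewrite /= modn_dvdm ?dvdn_mulr // chinese_modl // modn_small.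
by rewrite /= modn_dvdm ?dvdn_mull // chinese_modr // modn_small.
Qed.

Section PolyPermReduction.
Variables (N d : nat) (N_gt0 : 0 < N) (d_dvd_N : d %| N) (d_gt0 : 0 < d).
Variables (pi : {perm 'I_N}) (a : seq nat).
Hypothesis pi_poly : forall x : 'I_N, val (pi x) = poly_eval_mod N a x.

Definition Zn_poly (x : 'I_d) : 'I_d :=
  Ordinal (ltn_pmod (\sum_(i < size a) nth 0 a i * x ^ i) d_gt0).

Lemma Zn_proj_perm x : Zn_proj d_gt0 (pi x) = Zn_poly (Zn_proj d_gt0 x).
Proof.
apply: val_inj; rewrite /= pi_poly /poly_eval_mod modn_dvdm //.
exact/esym/poly_eval_modn.
Qed.

Lemma Zn_poly_inj : injective Zn_poly.
Proof.
pose r y := Zn_proj d_gt0 (pi^-1 (widen_ord (dvdn_leq N_gt0 d_dvd_N) y))%g.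
have rK : cancel r Zn_poly.
  by move=> y; apply: val_inj; rewrite /r -Zn_proj_perm permKV /= modn_small.
exact: can_inj (canF_sym rK).
Qed.

Definition perm_modn : {perm 'I_d} := perm Zn_poly_inj.

Lemma is_poly_perm_modn : is_poly_perm perm_modn.
Proof. by exists a => x; rewrite permE. Qed.

Lemma Zn_proj_shift_perm k x :
  Zn_proj d_gt0 ((shift_perm k * pi)%g x) =
  (shift_perm (Zn_proj d_gt0 k) * perm_modn)%g (Zn_proj d_gt0 x).
Proof.
rewrite !permM Zn_proj_perm !permE; congr Zn_poly; apply: val_inj => /=.
by rewrite modn_dvdm // modnDm.
Qed.

End PolyPermReduction.

Lemma poly_perm_coprime_split n m (pi : {perm 'I_(n * m)}) :
    0 < n -> 0 < m -> coprime n m -> is_poly_perm pi ->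
  exists (pn : {perm 'I_n}) (pm : {perm 'I_m}),
    [/\ is_poly_perm pn, is_poly_perm pm &
        max_shift_cyc pn * max_shift_cyc pm <= max_shift_cyc pi].
Proof.
move=> n_gt0 m_gt0 co_nm [a pi_poly].
have nm_gt0 : 0 < n * m by rewrite muln_gt0 n_gt0 m_gt0.
have [n_dvd m_dvd] : n %| n * m /\ m %| n * m by rewrite dvdn_mulr ?dvdn_mull.
set pn := perm_modn nm_gt0 n_dvd n_gt0 pi_poly.
set pm := perm_modn nm_gt0 m_dvd m_gt0 pi_poly.
exists pn, pm; split; try exact: is_poly_perm_modn.
have [kn ->] : {k | max_shift_cyc pn = cyc (shift_perm k * pn)}.
  by apply: eq_bigmax; rewrite card_ord.
have [km ->] : {k | max_shift_cyc pm = cyc (shift_perm k * pm)}.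
  by apply: eq_bigmax; rewrite card_ord.
have [k [<- <-]] := Zn_proj_onto_coprime n_gt0 m_gt0 co_nm kn km.
apply: leq_trans (leq_bigmax k).
apply: card_porbits_semiconj2 (Zn_proj_shift_perm _ _ _ _ _)
  (Zn_proj_shift_perm _ _ _ _ _) (Zn_proj_onto_coprime n_gt0 m_gt0 co_nm).
Qed.

Lemma c_poly_le_max_shift_cyc n (pi : {perm 'I_n}) :
  is_poly_perm pi -> c_poly n <= max_shift_cyc pi.
Proof.
move=> pi_poly; rewrite /c_poly -minEnat.
by apply: (@Order.TotalTheory.bigmin_le_cond _ nat); apply/asboolP.
Qed.

Lemma is_poly_perm1 n : is_poly_perm (1%g : {perm 'I_n}).
Proof.
exists [:: 0; 1] => x; rewrite perm1 /poly_eval_mod big_ord_recr big_ord1 /=.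
by rewrite mul0n add0n mul1n expn1 modn_small.
Qed.

Lemma c_poly_leq n : c_poly n <= n.
Proof.
apply: leq_trans (c_poly_le_max_shift_cyc (is_poly_perm1 n)) _.
apply/bigmax_leqP => k _; rewrite /cyc /porbits -[n in _ <= n]card_ord.
exact: leq_imset_card.
Qed.

Theorem lemma5p1 (n m : nat) (hn : 0 < n) (hm : 0 < m) (hnm : coprime n m) :
  c_poly n * c_poly m <= c_poly (n * m).
Proof.
rewrite [c_poly (n * m)]/c_poly -minEnat.
apply/(@Order.TotalTheory.bigmin_geP _ nat); split.
  by apply: leqW; apply: leq_mul; apply: c_poly_leq.
move=> pi /asboolP /(poly_perm_coprime_split hn hm hnm)[pn [pm [pn_poly pm_poly]]].
by apply: leq_trans; apply: leq_mul; apply: c_poly_le_max_shift_cyc.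
Qed.
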